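(* Let $A\in\mathbb{R}^{n\times n}$ be nonsingular with $A\geq 0$ and $A^{-1}\geq 0$, and let $(U_k^{(i)},V_k^{(i)},E_k)_{k=1}^{p}$, $i=1,2$, be two weak regular multisplittings of $A$ (with the same weighting matrices $E_k$). If $[U_k^{(1)}]^{-1}\geq[U_k^{(2)}]^{-1}$ for each $k=1,\ldots,p$, then $\rho(H_1)\leq\rho(H_2)<1$, where $H_i=\sum_{k=1}^{p}E_k[U_k^{(i)}]^{-1}V_k^{(i)}$ for $i=1,2$.
   Context: Inequalities are entrywise; $\rho(\cdot)$ is the spectral radius. A splitting $A=U-V$ of $A\in\mathbb{R}^{n\times n}$ is weak regular if $U$ is nonsingular, $U^{-1}\geq 0$ and $U^{-1}V\geq 0$. A weak regular multisplitting of $A$ is a triplet $(U_k,V_k,E_k)_{k=1}^{p}$ where each $A=U_k-V_k$ is a weak regular splitting and each $E_k\geq 0$ is an $n\times n$ diagonal matrix with $\sum_{k=1}^{p}E_k=I$. *)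

From HB Require Import structures.
From mathcomp Require Import all_boot all_order all_algebra.
From mathcomp Require Import reals.
From mathcomp Require Import complex.
Set Implicit Arguments. Unset Strict Implicit. Unset Printing Implicit Defensive.
Import Order.TTheory GRing.Theory Num.Theory.
Local Open Scope ring_scope.

Definition mx_le (R : realType) (m n : nat) (A B : 'M[R]_(m, n)) : Prop :=
  forall i j, A i j <= B i j.

Definition mx_nonneg (R : realType) (m n : nat) (A : 'M[R]_(m, n)) : Prop :=
  mx_le 0 A.

Definition complexify (R : realType) (n : nat) (A : 'M[R]_n) : 'M[R[i]]_n :=
  map_mx (fun x => (x%:C)%C) A.

(* The list (with multiplicity) of the complex eigenvalues of A,
   i.e. the roots of its characteristic polynomial in R[i]. *)
Definition eigenvalues (R : realType) (n : nat) (A : 'M[R]_n) : seq R[i] :=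
  sval (closed_field_poly_normal (char_poly (complexify A))).

(* Spectral radius: max modulus of the eigenvalues (0 when n = 0). *)
Definition spectral_radius (R : realType) (n : nat) (A : 'M[R]_n) : R :=
  \big[Num.max/0]_(z <- eigenvalues A) ComplexField.Normc.normc z.

Definition weak_regular_splitting (R : realType) (n : nat) (A U V : 'M[R]_n) : Prop :=
  [/\ A = U - V, U \in unitmx, mx_nonneg (invmx U) & mx_nonneg (invmx U *m V)].

Definition weak_regular_multisplitting (R : realType) (n p : nat)
    (A : 'M[R]_n) (U V E : 'I_p -> 'M[R]_n) : Prop :=
  [/\ forall k, weak_regular_splitting A (U k) (V k),
      forall k, is_diag_mx (E k),
      forall k, mx_nonneg (E k)
    & \sum_(k < p) E k = 1%:M].

Definition multisplitting_iter (R : realType) (n p : nat)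
    (U V E : 'I_p -> 'M[R]_n) : 'M[R]_n :=
  \sum_(k < p) (E k *m (invmx (U k) *m V k)).

(* Put T_i = \sum_k E_k (U_k^(i))^-1, so that H_i = I - T_i A.  Then
   H_2 - H_1 = (T_1 - T_2) A >= 0, and rho(H_1) <= rho(H_2) is the monotonicity of
   the spectral radius on nonnegative matrices; and w = A^-1 1 > 0 satisfies
   (I - H_2) w = T_2 1 > 0, which forces rho(H_2) < 1.
   Both facts rest on Z-matrices Q (nonpositive off the diagonal): if Q w > 0 for
   some w > 0, then Q x >= 0 implies x >= 0.  So when t I - M is such a matrix,
   no nonzero x >= 0 has M x >= t x; applied to the moduli of an eigenvector this
   gives |l| < t for every eigenvalue l.  Conversely, if M x >= r x for such an x,
   then r I - M is not of that kind although t I - M is for large t; decreasing t,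
   the property is open, and it is closed as long as t is not an eigenvalue, since
   there the resolvent (t I - M)^-1 >= 0 depends continuously on t.  Hence some
   real eigenvalue t >= r of M exists. *)

From HB Require Import structures.
From mathcomp Require Import all_boot all_order all_algebra.
From mathcomp Require Import reals complex polyrcf boolp classical_sets.
From mathcomp Require Import lra.
Set Implicit Arguments. Unset Strict Implicit. Unset Printing Implicit Defensive.
Import Order.TTheory GRing.Theory Num.Theory.
Local Open Scope ring_scope.

Section EntrywiseOrder.
Variable R : realType.

Definition mx_pos m n (A : 'M[R]_(m, n)) : Prop := forall i j, 0 < A i j.

Lemma mx_nonnegE m n (A : 'M[R]_(m, n)) : mx_nonneg A <-> forall i j, 0 <= A i j.
Proof. by split=> h i j; have := h i j; rewrite mxE. Qed.

Lemma mx_nonneg_subr m n (A B : 'M[R]_(m, n)) : mx_nonneg (B - A) <-> mx_le A B.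
Proof.
by rewrite mx_nonnegE; split=> h i j; have := h i j; rewrite !mxE subr_ge0.
Qed.

Lemma mx_le_trans m n (B A C : 'M[R]_(m, n)) : mx_le A B -> mx_le B C -> mx_le A C.
Proof. by move=> AB BC i j; apply: le_trans (AB i j) (BC i j). Qed.

Lemma mx_le_scaler m n (s t : R) (X : 'M[R]_(m, n)) :
  s <= t -> mx_nonneg X -> mx_le (s *: X) (t *: X).
Proof.
by move=> st /mx_nonnegE X_ge0 i j; rewrite !mxE ler_wpM2r.
Qed.

Lemma mx_nonneg_anti m n (A : 'M[R]_(m, n)) :
  mx_nonneg A -> mx_nonneg (- A) -> A = 0.
Proof.
move=> /mx_nonnegE A_ge0 /mx_nonnegE NA_ge0; apply/matrixP => i j; rewrite mxE.
by apply/le_anti; have := NA_ge0 i j; rewrite mxE oppr_ge0 => ->; rewrite A_ge0.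
Qed.

Lemma mx_nonneg_mul m n q (A : 'M[R]_(m, n)) (B : 'M[R]_(n, q)) :
  mx_nonneg A -> mx_nonneg B -> mx_nonneg (A *m B).
Proof.
move=> /mx_nonnegE A0 /mx_nonnegE B0; apply/mx_nonnegE => i j; rewrite mxE.
by apply: sumr_ge0 => k _; apply: mulr_ge0.
Qed.

Lemma mx_le_mulr m n q (A B : 'M[R]_(m, n)) (X : 'M[R]_(n, q)) :
  mx_le A B -> mx_nonneg X -> mx_le (A *m X) (B *m X).
Proof.
move=> /mx_nonneg_subr AB X_ge0; apply/mx_nonneg_subr.
by rewrite -mulmxBl; apply: mx_nonneg_mul.
Qed.

Lemma mx_nonneg_sum m n p (F : 'I_p -> 'M[R]_(m, n)) :
  (forall k, mx_nonneg (F k)) -> mx_nonneg (\sum_k F k).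
Proof.
move=> F0; apply/mx_nonnegE => i j; rewrite summxE.
by apply: sumr_ge0 => k _; have /mx_nonnegE := F0 k; apply.
Qed.

Lemma unitmx_nonneg_rowsum_gt0 n (N : 'M[R]_n) :
  N \in unitmx -> mx_nonneg N -> mx_pos (N *m const_mx 1 : 'cV_n).
Proof.
move=> Nunit /mx_nonnegE N0 i j; rewrite mxE.
under eq_bigr do rewrite mxE mulr1.
rewrite lt_def sumr_ge0 ?andbT => [|k _]; last exact: N0.
apply: contra_neq (@oner_neq0 R) => /(psumr_eq0P (fun k _ => N0 i k)) Ni0.
have /matrixP/(_ i i) := mulmxV Nunit; rewrite !mxE eqxx mulr1n => <-.
by rewrite big1 // => k _; rewrite Ni0 ?mul0r.
Qed.

End EntrywiseOrder.

Section ZMatrix.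
Variables (R : realType) (n : nat).
Implicit Types Q : 'M[R]_n.

Definition Zmatrix Q : Prop := forall i j, i != j -> Q i j <= 0.

(* Equivalent to the usual [exists x >= 0, Q x > 0]: perturb [x] by a small [w]. *)
Definition semipositive Q : Prop :=
  exists2 w : 'cV[R]_n, mx_pos w & mx_pos (Q *m w).

Lemma Zmatrix_monotone m Q (X : 'M[R]_(n, m)) :
  Zmatrix Q -> semipositive Q -> mx_nonneg (Q *m X) -> mx_nonneg X.
Proof.
move=> ZQ [w w_gt0 Qw_gt0] /mx_nonnegE QX_ge0; apply/mx_nonnegE => i1 j.
rewrite leNgt; apply/negP => Xi1_lt0.
have [i _ ratio_min] := @arg_minP _ R _ i1 xpredT (fun i => X i j / w i 0) isT.
pose c := - (X i j / w i 0).
have c_gt0 : 0 < c.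
  rewrite oppr_gt0; apply: le_lt_trans (ratio_min i1 isT) _.
  by rewrite pmulr_llt0 ?invr_gt0.
(* [X + c w] is a nonnegative column vanishing at [i] *)
have shift_ge0 k : 0 <= X k j + c * w k 0.
  rewrite mulNr subr_ge0 -ler_pdivlMr //; exact: ratio_min.
have shift_i : X i j + c * w i 0 = 0.
  by rewrite mulNr divfK ?subrr // gt_eqF.
have : 0 < (Q *m X) i j + c * (Q *m w) i 0 by rewrite ltr_wpDl ?mulr_gt0.
rewrite !mxE mulr_sumr -big_split /= ltNge => /negP; apply.
apply: sumr_le0 => k _; rewrite mulrCA -mulrDr.
have [->|ki] := eqVneq k i; first by rewrite shift_i mulr0.
by apply: mulr_le0_ge0; [apply: ZQ; rewrite eq_sym | exact: shift_ge0].
Qed.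

Lemma Zmatrix_semipositive_unitmx Q : Zmatrix Q -> semipositive Q -> Q \in unitmx.
Proof.
move=> ZQ sQ; rewrite unitmxE unitfE -det_tr; apply/det0P => -[v v_neq0 vQ].
have Qv : Q *m v^T = 0 by rewrite -[Q]trmxK -trmx_mul vQ trmx0.
have kernel_ge0 (x : 'cV_n) : Q *m x = 0 -> mx_nonneg x.
  move=> Qx; apply: (Zmatrix_monotone ZQ sQ).
  by rewrite Qx; apply/mx_nonnegE => i j; rewrite mxE.
have v_ge0 := kernel_ge0 _ Qv.
have v_le0 : mx_nonneg (- v^T) by apply: kernel_ge0; rewrite mulmxN Qv oppr0.
by move/eqP: v_neq0; apply; apply: trmx_inj; rewrite trmx0; apply: mx_nonneg_anti.
Qed.

Lemma Zmatrix_semipositive_invmx_ge0 Q :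
  Zmatrix Q -> semipositive Q -> mx_nonneg (invmx Q).
Proof.
move=> ZQ sQ; apply: (Zmatrix_monotone ZQ sQ).
rewrite mulmxV; last exact: Zmatrix_semipositive_unitmx.
by apply/mx_nonnegE => i j; rewrite mxE ler0n.
Qed.

Lemma invmx_ge0_semipositive Q :
  Q \in unitmx -> mx_nonneg (invmx Q) -> semipositive Q.
Proof.
move=> Qunit Qinv_ge0; exists (invmx Q *m const_mx 1).
  by apply: unitmx_nonneg_rowsum_gt0; rewrite ?unitmx_inv.
by rewrite mulmxA mulmxV // mul1mx => i j; rewrite mxE ltr01.
Qed.

End ZMatrix.

Lemma horner_char_poly_mx (R : comNzRingType) n (A : 'M[R]_n) (x : R) :
  map_mx (horner_eval x) (char_poly_mx A) = x%:M - A.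
Proof.
apply/matrixP => i j; rewrite !mxE rmorphB rmorphMn /= !horner_evalE.
by rewrite hornerX hornerC.
Qed.

Lemma horner_char_poly (R : comNzRingType) n (A : 'M[R]_n) (x : R) :
  (char_poly A).[x] = \det (x%:M - A).
Proof.
by rewrite /char_poly -[_.[x]]/(horner_eval x _) -det_map_mx horner_char_poly_mx.
Qed.

Lemma invmx_scalar_subE (F : fieldType) n (M : 'M[F]_n) (t : F) i j :
  ~~ root (char_poly M) t ->
  invmx (t%:M - M) i j = (\adj (char_poly_mx M) i j).[t] / (char_poly M).[t].
Proof.
move=> not_root; have tM : t%:M - M \in unitmx.
  by rewrite unitmxE unitfE -horner_char_poly.
rewrite /invmx tM mxE horner_char_poly mulrC; congr (_ * _).
by rewrite -horner_char_poly_mx -map_mx_adj mxE.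
Qed.

Lemma divr_lt0_mul (R : realFieldType) (x y : R) : (x / y < 0) = (x * y < 0).
Proof.
have [->|y_neq0] := eqVneq y 0; first by rewrite invr0 !mulr0.
have yy_gt0 : 0 < y * y by rewrite -expr2 exprn_even_gt0 ?y_neq0.
have -> : x / y = x * y / (y * y) by rewrite invfM mulrA mulfK.
by rewrite pmulr_llt0 // invr_gt0.
Qed.

Lemma horner_lt0_right (R : rcfType) (s : {poly R}) (t : R) :
  s.[t] < 0 -> exists2 u, t < u & s.[u] < 0.
Proof.
move=> st_lt0; have s_neq0 : s != 0.
  by apply: contraTneq st_lt0 => ->; rewrite horner0 ltxx.
have t_lt_t1 : t < t + 1 by rewrite ltrDl ltr01.
have [u u_near] := neighpr_wit t_lt_t1 s_neq0.
exists u; first by move: u_near; rewrite /neighpr in_itv /= => /andP[].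
have := sgr_neighprN (ltr0_neq0 st_lt0) u_near.
by rewrite (ltr0_sg st_lt0) => /eqP; rewrite sgr_cp0.
Qed.

Lemma horner_div_lt0_right (R : rcfType) (p q : {poly R}) (t : R) :
  p.[t] / q.[t] < 0 -> exists2 u, t < u & p.[u] / q.[u] < 0.
Proof.
rewrite divr_lt0_mul -hornerM => /horner_lt0_right[u tu pq_lt0].
by exists u; rewrite // divr_lt0_mul -hornerM.
Qed.

Section ScalarShift.
Variables (R : realType) (n : nat) (M : 'M[R]_n).
Hypothesis M_ge0 : mx_nonneg M.

Lemma Zmatrix_scalar_sub t : Zmatrix (t%:M - M).
Proof.
move=> i j ij; rewrite !mxE (negbTE ij) mulr0n sub0r oppr_le0.
by have /mx_nonnegE := M_ge0; apply.
Qed.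

Lemma scalar_sub_mulmxE t (w : 'cV[R]_n) i :
  ((t%:M - M) *m w) i 0 = t * w i 0 - (M *m w) i 0.
Proof. by rewrite mulmxBl mul_scalar_mx !mxE. Qed.

Lemma semipositive_scalar_sub_supereigenvector t (x : 'cV[R]_n) :
  semipositive (t%:M - M) -> mx_nonneg x -> mx_le (t *: x) (M *m x) -> x = 0.
Proof.
move=> tM_pos x_ge0 tx_le_Mx; apply: mx_nonneg_anti x_ge0 _.
apply: (Zmatrix_monotone (Zmatrix_scalar_sub t) tM_pos).
by rewrite mulmxN mulmxBl mul_scalar_mx opprB; apply/mx_nonneg_subr.
Qed.

Lemma semipositive_scalar_sub_mono t u :
  t <= u -> semipositive (t%:M - M) -> semipositive (u%:M - M).
Proof.
move=> tu [w w_gt0 Qw_gt0]; exists w => // i j; rewrite (ord1 j).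
apply: lt_le_trans (Qw_gt0 i 0) _; rewrite !scalar_sub_mulmxE lerD2r.
by rewrite ler_wpM2r // ltW.
Qed.

Lemma semipositive_scalar_sub_open t :
  semipositive (t%:M - M) -> exists2 d, 0 < d & semipositive ((t - d)%:M - M).
Proof.
move=> [w w_gt0 Qw_gt0].
pose d := \big[Num.min/1]_i (((t%:M - M) *m w) i 0 / w i 0 / 2).
exists d.
  rewrite /d; elim/big_ind: _ => [|x y x_gt0 y_gt0|i _]; first exact: ltr01.
    by rewrite lt_min x_gt0.
  by rewrite !divr_gt0.
exists w => // i j; rewrite (ord1 j).
have d_le : d * w i 0 <= ((t%:M - M) *m w) i 0 / 2.
  by rewrite -ler_pdivlMr // mulrAC; apply: bigmin_le.
have := Qw_gt0 i 0; rewrite !scalar_sub_mulmxE in d_le *; rewrite mulrBl; lra.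
Qed.

Lemma semipositive_scalar_sub_large : exists t, semipositive (t%:M - M).
Proof.
have /mx_nonnegE M_ge0' := M_ge0.
have rowsum k : (M *m const_mx 1) k 0 = \sum_j M k j.
  by rewrite mxE; apply: eq_bigr => j _; rewrite mxE mulr1.
exists (1 + \sum_i \sum_j M i j); exists (const_mx 1) => i j; rewrite (ord1 j).
  by rewrite mxE ltr01.
rewrite scalar_sub_mulmxE rowsum mxE mulr1 subr_gt0 [X in _ < 1 + X](bigD1 i) //=.
have : 0 <= \sum_(k < n | k != i) \sum_j M k j.
  by apply: sumr_ge0 => k _; apply: sumr_ge0.
lra.
Qed.

Lemma semipositive_scalar_sub_closed (t : R) :
  ~~ root (char_poly M) t -> (forall u, t < u -> semipositive (u%:M - M)) ->
  semipositive (t%:M - M).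
Proof.
move=> t_not_root above_t.
have tM : t%:M - M \in unitmx by rewrite unitmxE unitfE -horner_char_poly.
apply: invmx_ge0_semipositive tM _; apply/mx_nonnegE => i j.
rewrite leNgt invmx_scalar_subE //.
apply/negP => /horner_div_lt0_right[u tu ratio_lt0].
have u_not_root : ~~ root (char_poly M) u.
  by apply: contraTN ratio_lt0 => /eqP->; rewrite invr0 mulr0 ltxx.
have /mx_nonnegE/(_ i j) := Zmatrix_semipositive_invmx_ge0
  (Zmatrix_scalar_sub u) (above_t u tu).
by rewrite invmx_scalar_subE // leNgt ratio_lt0.
Qed.

(* The infimum of the [u >= r] with [u I - M] semipositive is again such a [u]
   (closedness, no eigenvalue being crossed), and it cannot exceed [r] (openness). *)
Lemma semipositive_scalar_sub_no_root (r : R) :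
  (forall t, r <= t -> ~~ root (char_poly M) t) -> semipositive (r%:M - M).
Proof.
move=> no_root; have [t0 t0_pos] := semipositive_scalar_sub_large.
pose S : set R := fun u => r <= u /\ semipositive (u%:M - M).
have S_t0 : S (Num.max r t0).
  split; first by rewrite le_max lexx.
  by apply: semipositive_scalar_sub_mono t0_pos; rewrite le_max lexx orbT.
have S_inf : has_inf S by split; [exists (Num.max r t0) | exists r => u []].
pose tinf := inf S.
have r_le_tinf : r <= tinf by apply: lb_le_inf => [|u []]; first exists (Num.max r t0).
have above_tinf (u : R) : tinf < u -> semipositive (u%:M - M).
  move=> tinf_u; have u_tinf_gt0 : 0 < u - tinf by rewrite subr_gt0.
  have [s [_ s_pos] s_lt] := inf_adherent u_tinf_gt0 S_inf.
  by apply: semipositive_scalar_sub_mono s_pos; rewrite -/tinf in s_lt; lra.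
have tinf_pos := semipositive_scalar_sub_closed (no_root tinf r_le_tinf) above_tinf.
have [r_lt_tinf|tinf_le_r] := ltrP r tinf; last first.
  by have <- : tinf = r by apply/le_anti/andP.
have [d d_gt0 tinfd_pos] := semipositive_scalar_sub_open tinf_pos.
pose e := Num.min d (tinf - r).
have S_tinfe : S (tinf - e).
  split; first by rewrite lerBrDl addrC -lerBrDl ge_min lexx orbT.
  by apply: semipositive_scalar_sub_mono tinfd_pos; rewrite lerD2l lerN2 ge_min lexx.
have := ge_inf (proj2 S_inf) S_tinfe; rewrite -/tinf.
have : 0 < e by rewrite lt_min d_gt0 subr_gt0.
lra.
Qed.

End ScalarShift.

Lemma char_poly_root_ge (R : realType) n (M : 'M[R]_n) (x : 'cV[R]_n) (r : R) :
  mx_nonneg M -> mx_nonneg x -> x != 0 -> mx_le (r *: x) (M *m x) ->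
  exists2 t, r <= t & root (char_poly M) t.
Proof.
move=> M_ge0 x_ge0 x_neq0 rx_le_Mx.
have [//|no_root] := pselect (exists2 t, r <= t & root (char_poly M) t).
have {}no_root t : r <= t -> ~~ root (char_poly M) t.
  by move=> rt; apply/negP => t_root; apply: no_root; exists t.
have rM_pos := semipositive_scalar_sub_no_root M_ge0 no_root.
by rewrite (semipositive_scalar_sub_supereigenvector M_ge0 rM_pos x_ge0 rx_le_Mx)
  eqxx in x_neq0.
Qed.

Section Spectrum.
Variables (R : realType) (n : nat).
Implicit Types M N : 'M[R]_n.
Local Notation normc := (@ComplexField.Normc.normc R).

Lemma normc_ge0 (z : R[i]) : 0 <= normc z.
Proof. by case: z => a b; apply: sqrtr_ge0. Qed.

Lemma normC_normc (z : R[i]) : `|z| = (normc z)%:C%C.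
Proof. by case: z. Qed.

Lemma normc_real (t : R) : normc t%:C%C = `|t|.
Proof. by rewrite /= expr0n addr0 sqrtr_sqr. Qed.

Lemma map_normc_ge0 m k (Z : 'M[R[i]]_(m, k)) : mx_nonneg (map_mx normc Z).
Proof. by apply/mx_nonnegE => i j; rewrite mxE normc_ge0. Qed.

Lemma map_normc_eq0 m k (Z : 'M[R[i]]_(m, k)) : (map_mx normc Z == 0) = (Z == 0).
Proof.
apply/eqP/eqP => [/matrixP Z0|->]; apply/matrixP => i j; rewrite !mxE.
  by apply: ComplexField.Normc.eq0_normc; have := Z0 i j; rewrite !mxE.
exact: ComplexField.Normc.normc0.
Qed.

Lemma eigenvalues_root M l : l \in eigenvalues M -> root (char_poly (complexify M)) l.
Proof.
rewrite /eigenvalues; case: closed_field_poly_normal => s /= ->.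
by rewrite rootZ ?root_prod_XsubC // (monicP (char_poly_monic _)) oner_eq0.
Qed.

Lemma root_char_poly_eigenvalues M (t : R) :
  root (char_poly M) t -> t%:C%C \in eigenvalues M.
Proof.
move=> t_root; rewrite /eigenvalues; case: closed_field_poly_normal => s /= s_def.
have : root (char_poly (complexify M)) t%:C%C.
  by rewrite /complexify -map_char_poly rootE horner_map (rootP t_root) rmorph0.
by rewrite s_def rootZ ?root_prod_XsubC // (monicP (char_poly_monic _)) oner_eq0.
Qed.

Lemma eigenvalues_eigenvector M l : l \in eigenvalues M ->
  exists2 z : 'cV[R[i]]_n, z != 0 & complexify M *m z = l *: z.
Proof.
move=> /eigenvalues_root; rewrite /root horner_char_poly -det_tr => /det0P[v v_neq0 vM].
exists v^T; first by rewrite trmx_eq0.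
have Mv : (l%:M - complexify M) *m v^T = 0.
  by rewrite -[_ *m _]trmxK trmx_mul trmxK vM trmx0.
apply/eqP; rewrite -subr_eq0 -[l *: v^T]mul_scalar_mx -mulmxBl -opprB mulNmx.
by rewrite Mv oppr0.
Qed.

Lemma eigenvector_normc_le M l (z : 'cV[R[i]]_n) :
  mx_nonneg M -> complexify M *m z = l *: z ->
  mx_le (normc l *: map_mx normc z) (M *m map_mx normc z).
Proof.
move=> /mx_nonnegE M_ge0 Mz i j; rewrite (ord1 j).
have /matrixP/(_ i 0) := Mz; rewrite !mxE => Mz_i.
rewrite -lecR rmorphM /= -!normC_normc -normrM -Mz_i.
apply: le_trans (ler_norm_sum _ _ _) _.
rewrite rmorph_sum /=; apply: ler_sum => k _.
rewrite !mxE normrM rmorphM /= -normC_normc ger0_norm //.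
by rewrite -(rmorph0 (real_complex R)) lecR.
Qed.

Lemma spectral_radius_ge0 M : 0 <= spectral_radius M.
Proof. exact: bigmax_ge_id. Qed.

Lemma normc_le_spectral_radius M l :
  l \in eigenvalues M -> normc l <= spectral_radius M.
Proof. by move=> l_eig; apply: le_bigmax_seq. Qed.

Lemma spectral_radius_le M (c : R) :
  0 <= c -> (forall l, l \in eigenvalues M -> normc l <= c) -> spectral_radius M <= c.
Proof. by move=> c_ge0 le_c; rewrite /spectral_radius big_seq; apply: bigmax_le. Qed.

Lemma spectral_radius_lt M (c : R) :
  0 < c -> (forall l, l \in eigenvalues M -> normc l < c) -> spectral_radius M < c.
Proof.
move=> c_gt0 lt_c; rewrite /spectral_radius big_seq.
by elim/big_ind: _ => // x y; rewrite gt_max => -> ->.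
Qed.

Lemma spectral_radius_le_mono M N :
  mx_nonneg M -> mx_le M N -> spectral_radius M <= spectral_radius N.
Proof.
move=> M_ge0 MN; have N_ge0 : mx_nonneg N := mx_le_trans M_ge0 MN.
apply: spectral_radius_le (spectral_radius_ge0 N) _ => l.
move=> /eigenvalues_eigenvector[z z_neq0 Mz].
have lz_le_Nz : mx_le (normc l *: map_mx normc z) (N *m map_mx normc z).
  apply: mx_le_trans (eigenvector_normc_le M_ge0 Mz) _.
  exact: mx_le_mulr MN (map_normc_ge0 z).
have z_abs_neq0 : map_mx normc z != 0 by rewrite map_normc_eq0.
have [t lt t_root] := char_poly_root_ge N_ge0 (map_normc_ge0 z) z_abs_neq0 lz_le_Nz.
have := normc_le_spectral_radius (root_char_poly_eigenvalues t_root).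
by rewrite normc_real; apply: le_trans; apply: le_trans lt (ler_norm t).
Qed.

Lemma spectral_radius_lt_semipositive M (t : R) :
  0 < t -> mx_nonneg M -> semipositive (t%:M - M) -> spectral_radius M < t.
Proof.
move=> t_gt0 M_ge0 tM_pos; apply: spectral_radius_lt => // l.
move=> /eigenvalues_eigenvector[z z_neq0 Mz]; rewrite ltNge; apply/negP => t_le_l.
have z0 : map_mx normc z = 0.
  apply: (semipositive_scalar_sub_supereigenvector M_ge0 tM_pos (map_normc_ge0 z)).
  apply: mx_le_trans (eigenvector_normc_le M_ge0 Mz).
  exact: mx_le_scaler t_le_l (map_normc_ge0 z).
by move: z_neq0; rewrite -map_normc_eq0 z0 eqxx.
Qed.

End Spectrum.

Lemma is_diag_mulmxE (R : pzSemiRingType) n k (D : 'M[R]_n) (X : 'M[R]_(n, k)) i j :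
  is_diag_mx D -> (D *m X) i j = D i i * X i j.
Proof.
move=> /is_diag_mxP D_diag; rewrite mxE (bigD1 i) //= big1 ?addr0 // => l li.
by rewrite D_diag ?mul0r // eq_sym.
Qed.

Definition weighted_inverse (R : realType) n p (U E : 'I_p -> 'M[R]_n) : 'M[R]_n :=
  \sum_k E k *m invmx (U k).

Lemma weighted_inverse_mono (R : realType) n p (U1 U2 E : 'I_p -> 'M[R]_n) :
  (forall k, mx_nonneg (E k)) -> (forall k, mx_le (invmx (U2 k)) (invmx (U1 k))) ->
  mx_le (weighted_inverse U2 E) (weighted_inverse U1 E).
Proof.
move=> E_ge0 le_inv; apply/mx_nonneg_subr; rewrite -sumrB.
apply: mx_nonneg_sum => k; rewrite -mulmxBr.
by apply: mx_nonneg_mul => //; apply/mx_nonneg_subr.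
Qed.

Section WeakRegularMultisplitting.
Variables (R : realType) (n p : nat) (A : 'M[R]_n) (U V E : 'I_p -> 'M[R]_n).
Hypothesis W : weak_regular_multisplitting A U V E.

Lemma multisplitting_iterE :
  multisplitting_iter U V E = 1%:M - weighted_inverse U E *m A.
Proof.
have [splitting _ _ E_sum] := W.
rewrite /multisplitting_iter /weighted_inverse -E_sum mulmx_suml -sumrB.
apply: eq_bigr => k _; have [A_def U_unit _ _] := splitting k.
by rewrite A_def mulmxBr mulmxKV // subKr mulmxA.
Qed.

Lemma multisplitting_iter_ge0 : mx_nonneg (multisplitting_iter U V E).
Proof.
have [splitting _ E_ge0 _] := W.
apply: mx_nonneg_sum => k; apply: mx_nonneg_mul => //.
by have [] := splitting k.
Qed.

Lemma weighted_inverse_rowsum_gt0 :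
  mx_pos (weighted_inverse U E *m const_mx 1 : 'cV_n).
Proof.
have [splitting E_diag E_ge0 E_sum] := W.
have Uinv_rowsum_gt0 k : mx_pos (invmx (U k) *m const_mx 1 : 'cV_n).
  have [_ U_unit Uinv_ge0 _] := splitting k.
  by apply: unitmx_nonneg_rowsum_gt0; rewrite ?unitmx_inv.
move=> i j; rewrite (ord1 j) mulmx_suml summxE.
under eq_bigr do rewrite -mulmxA is_diag_mulmxE //.
have term_ge0 k : 0 <= E k i i * (invmx (U k) *m const_mx 1 : 'cV_n) i 0.
  apply: mulr_ge0; last exact: ltW (Uinv_rowsum_gt0 k i 0).
  by have /mx_nonnegE := E_ge0 k; apply.
rewrite lt_def sumr_ge0 ?andbT => [|k _]; last exact: term_ge0.
apply: contra_neq (@oner_neq0 R) => /(psumr_eq0P (fun k _ => term_ge0 k)) terms0.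
have /matrixP/(_ i i) := E_sum; rewrite summxE !mxE eqxx mulr1n => <-.
apply: big1 => k _; have /eqP := terms0 k isT.
by rewrite mulf_eq0 (gt_eqF (Uinv_rowsum_gt0 k i 0)) orbF => /eqP.
Qed.

Lemma multisplitting_iter_semipositive :
  A \in unitmx -> mx_nonneg (invmx A) ->
  semipositive (1%:M - multisplitting_iter U V E).
Proof.
move=> A_unit Ainv_ge0; rewrite multisplitting_iterE subKr.
exists (invmx A *m const_mx 1).
  by apply: unitmx_nonneg_rowsum_gt0; rewrite ?unitmx_inv.
by rewrite mulmxA mulmxK //; apply: weighted_inverse_rowsum_gt0.
Qed.

End WeakRegularMultisplitting.

Theorem corollary5p14 (R : realType) (n p : nat) (A : 'M[R]_n)
    (U1 V1 U2 V2 E : 'I_p -> 'M[R]_n) :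
  A \in unitmx -> mx_nonneg A -> mx_nonneg (invmx A) ->
  weak_regular_multisplitting A U1 V1 E ->
  weak_regular_multisplitting A U2 V2 E ->
  (forall k, mx_le (invmx (U2 k)) (invmx (U1 k))) ->
  spectral_radius (multisplitting_iter U1 V1 E)
    <= spectral_radius (multisplitting_iter U2 V2 E)
  /\ spectral_radius (multisplitting_iter U2 V2 E) < 1.
Proof.
move=> A_unit A_ge0 Ainv_ge0 W1 W2 le_inv; have [_ _ E_ge0 _] := W1.
have H1_le_H2 : mx_le (multisplitting_iter U1 V1 E) (multisplitting_iter U2 V2 E).
  apply/mx_nonneg_subr; rewrite (multisplitting_iterE W1) (multisplitting_iterE W2).
  rewrite opprB addrC addrA subrK -mulmxBl; apply: mx_nonneg_mul A_ge0.
  exact/mx_nonneg_subr/weighted_inverse_mono.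
split; first exact: spectral_radius_le_mono (multisplitting_iter_ge0 W1) H1_le_H2.
apply: spectral_radius_lt_semipositive ltr01 (multisplitting_iter_ge0 W2) _.
exact: multisplitting_iter_semipositive W2 A_unit Ainv_ge0.
Qed.
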